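(* For $j\in\mathbb{Z}_{\ge0}$, \[ B_j(x)=D(x)\Big[\beta_E(j)^2+x\{\beta_E(j+1)^2-q^{-1}(q^{-1}\lambda^2-1)\beta_E(j)^2\}+q^{-1}x^2\{\beta_E(j+1)-q^{-1}\lambda\,\beta_E(j)\}^2\Big], \] where $B_j(x)=\sum_{l\ge0}\beta_E(l+j)^2x^l$ and $D(x)=\{1-(q^{-1}\lambda^2-1)q^{-1}x+(q^{-1}\lambda^2-1)q^{-2}x^2-q^{-3}x^3\}^{-1}$.
   Context: $F$ is a $p$-adic field with odd residue cardinality $q$, uniformizer $\varpi$. $\pi$ is an irreducible unitary unramified representation of $\mathrm{GL}_2(F)$ with trivial central character, a quotient of $\chi\times\chi^{-1}$ with $\chi$ unramified; $\alpha=\chi(\varpi)$, $\lambda=q^{1/2}(\alpha+\alpha^{-1})\in\mathbb{R}$. $\phi$ is the spherical unit vector, $E$ a quadratic étale algebra over $F$, $\alpha_E(\phi_1,\phi_2)=\int_{F^\times\backslash E^\times}\langle\pi(t)\phi_1,\phi_2\rangle d^\times t$ with $\alpha_E(\phi,\phi)\ne0$, and $\beta_E(l)=\alpha_E(\pi(\mathrm{diag}(\varpi^{-l},1))\phi,\phi)/\alpha_E(\phi,\phi)$, satisfying $q\beta_E(l+2)-\lambda\beta_E(l+1)+\beta_E(l)=0$. *)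

From Stdlib Require Import Reals Arith.
From Coquelicot Require Import Coquelicot.
Open Scope R_scope.

(* q is a power of an odd prime (residue cardinality of a p-adic field). *)
Definition odd_prime_power (q : nat) : Prop :=
  exists p k : nat, Znumtheory.prime (Z.of_nat p) /\ Nat.odd p = true /\
                    (0 < k)%nat /\ q = (p ^ k)%nat.

Definition satisfies_recurrence (q lambda : R) (beta : nat -> R) : Prop :=
  forall l : nat, q * beta (l + 2)%nat - lambda * beta (l + 1)%nat + beta l = 0.

Definition Dfun (q lambda x : R) : R :=
  / (1 - (/q * lambda ^ 2 - 1) * / q * x
       + (/q * lambda ^ 2 - 1) * / q ^ 2 * x ^ 2
       - / q ^ 3 * x ^ 3).

Definition Pj (q lambda : R) (beta : nat -> R) (j : nat) (x : R) : R :=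
  beta j ^ 2
  + x * (beta (j + 1)%nat ^ 2 - / q * (/ q * lambda ^ 2 - 1) * beta j ^ 2)
  + / q * x ^ 2 * (beta (j + 1)%nat - / q * lambda * beta j) ^ 2.

(** The squares of a solution of a second-order linear recurrence satisfy a
    third-order one: if [b] has characteristic roots [u, v] with [u v = /q],
    then [b^2] has characteristic roots [u^2, u v, v^2], and the reversed
    characteristic polynomial of [b^2] is exactly [1 / D(x)].  Hence the
    generating function of [l |-> beta (l + j)^2] is a quadratic polynomial,
    fixed by the first three terms, divided by [1 / D(x)].  A solution grows at
    most like [(|lambda| + 1)^l], so the series converges near [0]. *)

From Stdlib Require Import Reals Arith Lra Lia Psatz.
From Coquelicot Require Import Coquelicot.
Open Scope R_scope.

Definition rev_charpoly3 (c1 c2 c3 x : R) : R :=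
  1 - c1 * x + c2 * x ^ 2 - c3 * x ^ 3.

Lemma rev_charpoly3_neq0 (c1 c2 c3 x : R) :
  Rabs x * (1 + Rabs c1 + Rabs c2 + Rabs c3) < 1 ->
  rev_charpoly3 c1 c2 c3 x <> 0.
Proof.
  intros hx.
  pose proof (Rabs_pos x) as hx0.
  pose proof (Rabs_pos c1); pose proof (Rabs_pos c2); pose proof (Rabs_pos c3).
  assert (hx1 : Rabs x < 1) by nra.
  assert (htail : Rabs (c1 * x - c2 * x ^ 2 + c3 * x ^ 3)
                  <= Rabs x * (Rabs c1 + Rabs c2 + Rabs c3)).
  { unfold Rminus.
    eapply Rle_trans; [apply Rabs_triang|].
    eapply Rle_trans; [apply Rplus_le_compat_r, Rabs_triang|].
    rewrite Rabs_Ropp, !Rabs_mult, <- !RPow_abs.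
    assert (Rabs x ^ 2 <= Rabs x) by (simpl; nra).
    assert (Rabs x ^ 3 <= Rabs x) by (simpl; nra).
    nra. }
  unfold rev_charpoly3; intros h0.
  replace (c1 * x - c2 * x ^ 2 + c3 * x ^ 3) with 1 in htail by lra.
  rewrite Rabs_R1 in htail; nra.
Qed.

Lemma is_series_tail (a : nat -> R) (l : R) :
  is_series a l -> is_series (fun n => a (S n)) (l - a O).
Proof.
  intros H; apply is_series_incr_1.
  change (plus (l - a O) (a O)) with (l - a O + a O).
  now replace (l - a O + a O) with l by ring.
Qed.

(* The 3-fold tail of the series is [c1 x] times the 2-fold tail, minus
   [c2 x^2] times the 1-fold tail, plus [c3 x^3] times the series itself. *)
Lemma is_series_linrec3 (c1 c2 c3 x s : R) (u : nat -> R) :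
  (forall n, u (S (S (S n))) = c1 * u (S (S n)) - c2 * u (S n) + c3 * u n) ->
  is_series (fun n => u n * x ^ n) s ->
  rev_charpoly3 c1 c2 c3 x * s
  = u O + (u 1%nat - c1 * u O) * x + (u 2%nat - c1 * u 1%nat + c2 * u O) * x ^ 2.
Proof.
  intros hrec hs.
  set (a := fun n => u n * x ^ n) in hs.
  pose proof (is_series_tail _ _ hs) as tail1.
  pose proof (is_series_tail _ _ tail1) as tail2.
  pose proof (is_series_tail _ _ tail2) as tail3; cbv beta in tail1, tail2, tail3.
  pose proof (is_series_plus _ _ _ _
    (is_series_minus _ _ _ _ (is_series_scal_l (V := R_NormedModule) (c1 * x) _ _ tail2)
                             (is_series_scal_l (V := R_NormedModule) (c2 * x ^ 2) _ _ tail1))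
    (is_series_scal_l (V := R_NormedModule) (c3 * x ^ 3) _ _ hs)) as Hcomb.
  apply (is_series_ext _ (fun n => a (S (S (S n))))) in Hcomb; cycle 1.
  { intros n; unfold a; rewrite hrec.
    unfold plus, opp, scal; simpl; unfold mult; simpl; ring. }
  apply is_series_unique in tail3; apply is_series_unique in Hcomb.
  rewrite tail3 in Hcomb.
  unfold plus, opp, scal, mult in Hcomb; cbn -[pow] in Hcomb.
  unfold a in Hcomb; unfold rev_charpoly3; simpl in Hcomb |- *; nra.
Qed.

Lemma satisfies_recurrence_shift (q lam : R) (b : nat -> R) (j : nat) :
  satisfies_recurrence q lam b ->
  satisfies_recurrence q lam (fun l => b (l + j)%nat).
Proof.
  intros hrec l.
  replace (l + 2 + j)%nat with (l + j + 2)%nat by lia.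
  replace (l + 1 + j)%nat with (l + j + 1)%nat by lia.
  apply hrec.
Qed.

Lemma odd_prime_power_ge1 (q : nat) : odd_prime_power q -> (1 <= q)%nat.
Proof.
  intros [p [k [hp [_ [_ ->]]]]].
  apply Znumtheory.prime_ge_2 in hp.
  enough (p ^ k <> 0)%nat by lia.
  apply Nat.pow_nonzero; lia.
Qed.

Definition sq_coef1 (q lam : R) : R := (/ q * lam ^ 2 - 1) * / q.
Definition sq_coef2 (q lam : R) : R := (/ q * lam ^ 2 - 1) * / q ^ 2.
Definition sq_coef3 (q : R) : R := / q ^ 3.

Lemma Dfun_rev_charpoly3 (q lam x : R) :
  Dfun q lam x = / rev_charpoly3 (sq_coef1 q lam) (sq_coef2 q lam) (sq_coef3 q) x.
Proof. reflexivity. Qed.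

Section SquaresOfRecurrence.

Variables (q lam : R) (b : nat -> R).
Hypothesis hq : 1 <= q.
Hypothesis hrec : satisfies_recurrence q lam b.

Lemma recurrence_step (l : nat) : b (S (S l)) = (lam * b (S l) - b l) / q.
Proof.
  specialize (hrec l).
  replace (l + 2)%nat with (S (S l)) in hrec by lia.
  replace (l + 1)%nat with (S l) in hrec by lia.
  field_simplify_eq; lra.
Qed.

Lemma recurrence_sq_step (n : nat) :
  b (S (S (S n))) ^ 2 = sq_coef1 q lam * b (S (S n)) ^ 2
    - sq_coef2 q lam * b (S n) ^ 2 + sq_coef3 q * b n ^ 2.
Proof.
  rewrite (recurrence_step (S n)), (recurrence_step n).
  unfold sq_coef1, sq_coef2, sq_coef3; field; lra.
Qed.

Lemma Pj0_initial_terms (x : R) :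
  Pj q lam b 0 x
  = b O ^ 2 + (b 1%nat ^ 2 - sq_coef1 q lam * b O ^ 2) * x
    + (b 2%nat ^ 2 - sq_coef1 q lam * b 1%nat ^ 2 + sq_coef2 q lam * b O ^ 2) * x ^ 2.
Proof.
  rewrite (recurrence_step O).
  unfold Pj, sq_coef1, sq_coef2; simpl; field; lra.
Qed.

Let M := Rabs lam + 1.
Let A := Rmax (Rabs (b O)) (Rabs (b 1%nat)).

Lemma recurrence_growth (l : nat) : Rabs (b l) <= A * M ^ l.
Proof.
  assert (hM : 1 <= M) by (unfold M; pose proof (Rabs_pos lam); lra).
  assert (hA0 : Rabs (b O) <= A) by apply Rmax_l.
  assert (hA1 : Rabs (b 1%nat) <= A) by apply Rmax_r.
  enough (H : Rabs (b l) <= A * M ^ l /\ Rabs (b (S l)) <= A * M ^ S l) by apply H.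
  induction l as [|l [IH0 IH1]].
  - pose proof (Rabs_pos (b O)); simpl; split; nra.
  - split; [exact IH1|].
    rewrite recurrence_step.
    assert (hstep : Rabs ((lam * b (S l) - b l) / q)
                    <= Rabs lam * Rabs (b (S l)) + Rabs (b l)).
    { unfold Rdiv; rewrite Rabs_mult, Rabs_inv, (Rabs_right q) by lra.
      assert (hq' : 0 < / q <= 1).
      { split; [apply Rinv_0_lt_compat; lra|].
        rewrite <- Rinv_1; apply Rinv_le_contravar; lra. }
      pose proof (Rabs_pos (lam * b (S l) - b l)).
      assert (Rabs (lam * b (S l) - b l) <= Rabs lam * Rabs (b (S l)) + Rabs (b l)).
      { unfold Rminus; eapply Rle_trans; [apply Rabs_triang|].
        rewrite Rabs_mult, Rabs_Ropp; lra. }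
      nra. }
    assert (0 <= A * M ^ l).
    { pose proof (Rabs_pos (b O)); apply Rmult_le_pos; [lra|apply pow_le; lra]. }
    pose proof (Rabs_pos lam).
    (* [|lam| M^(l+1) + M^l <= M^(l+2)] because [M^2 = |lam| M + M]. *)
    unfold M in *; simpl in *; nra.
Qed.

Lemma ex_series_sq (x : R) :
  M ^ 2 * Rabs x < 1 -> ex_series (fun l => b l ^ 2 * x ^ l).
Proof.
  intros hx.
  apply (ex_series_le (V := R_CompleteNormedModule) _ (fun l => A ^ 2 * (M ^ 2 * Rabs x) ^ l)).
  - intros l; change (norm (b l ^ 2 * x ^ l)) with (Rabs (b l ^ 2 * x ^ l)).
    rewrite Rabs_mult, <- !RPow_abs, Rpow_mult_distr, <- pow_mult,
      Nat.mul_comm, pow_mult.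
    assert (Rabs (b l) ^ 2 <= (A * M ^ l) ^ 2).
    { apply pow_incr; split; [apply Rabs_pos|apply recurrence_growth]. }
    assert (0 <= Rabs x ^ l) by (apply pow_le, Rabs_pos).
    rewrite Rpow_mult_distr in *; nra.
  - apply (ex_series_scal_l (V := R_NormedModule)), ex_series_geom.
    rewrite Rabs_right; [lra|].
    pose proof (Rabs_pos lam); apply Rle_ge, Rmult_le_pos; [apply pow_le; unfold M|apply Rabs_pos]; lra.
Qed.

Lemma is_series_sq_recurrence :
  exists r : R, 0 < r /\ forall x : R, Rabs x < r ->
    is_series (fun l => b l ^ 2 * x ^ l) (Dfun q lam x * Pj q lam b 0 x).
Proof.
  set (C := 1 + Rabs (sq_coef1 q lam) + Rabs (sq_coef2 q lam) + Rabs (sq_coef3 q)).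
  assert (hC : 1 <= C).
  { unfold C; pose proof (Rabs_pos (sq_coef1 q lam));
      pose proof (Rabs_pos (sq_coef2 q lam)); pose proof (Rabs_pos (sq_coef3 q)); lra. }
  assert (hK : 1 <= M ^ 2) by (unfold M; pose proof (Rabs_pos lam); nra).
  exists (/ (C * M ^ 2)); split; [apply Rinv_0_lt_compat; nra|].
  intros x hx.
  assert (hxr : Rabs x * (C * M ^ 2) < 1).
  { apply (Rmult_lt_compat_r (C * M ^ 2)) in hx; [|nra].
    now rewrite Rinv_l in hx by nra. }
  pose proof (Rabs_pos x).
  assert (hden : rev_charpoly3 (sq_coef1 q lam) (sq_coef2 q lam) (sq_coef3 q) x <> 0).
  { apply rev_charpoly3_neq0; fold C; nra. }
  assert (hs : is_series (fun l => b l ^ 2 * x ^ l) (Series (fun l => b l ^ 2 * x ^ l))).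
  { apply Series_correct, ex_series_sq; nra. }
  pose proof (is_series_linrec3 _ _ _ _ _ (fun l => b l ^ 2) recurrence_sq_step hs)
    as hlin.
  rewrite Dfun_rev_charpoly3, Pj0_initial_terms, <- hlin.
  now rewrite <- Rmult_assoc, Rinv_l, Rmult_1_l.
Qed.

End SquaresOfRecurrence.

Theorem proposition4p3 (q : nat) (lambda : R) (beta : nat -> R) :
  odd_prime_power q ->
  satisfies_recurrence (INR q) lambda beta ->
  forall j : nat,
  exists r : R, 0 < r /\
    forall x : R, Rabs x < r ->
      is_series (fun l : nat => beta (l + j)%nat ^ 2 * x ^ l)
                (Dfun (INR q) lambda x * Pj (INR q) lambda beta j x).
Proof.
  intros hq hrec j.
  assert (hq1 : 1 <= INR q) by apply (le_INR 1), odd_prime_power_ge1, hq.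
  pose proof (satisfies_recurrence_shift _ _ _ j hrec) as hrec_j.
  replace (Pj (INR q) lambda beta j) with (Pj (INR q) lambda (fun l => beta (l + j)%nat) 0).
  - exact (is_series_sq_recurrence _ _ _ hq1 hrec_j).
  - unfold Pj; simpl; now rewrite Nat.add_1_r.
Qed.
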